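(* Let $\tilde s\in\mathbb N_0^d$ and $\tilde T\in\mathcal A(\tilde s)$. Then for each $i=1,\dots,d$ and every $t\in\mathbb N_0$, $T_i(t)$ is an $\mathbf F^i$-stopping time.
   Context: $(\Omega,\mathcal F,\mathbb P)$ complete; $\{\mathcal F(\tilde s)\}_{\tilde s\in\mathbb N_0^d}$ satisfies (F1) monotonicity in the componentwise order, (F2) $\mathcal F(\tilde 0)$ contains all null sets, (F4) $\mathcal F(\tilde s),\mathcal F(\tilde r)$ conditionally independent given $\mathcal F(\tilde s\wedge\tilde r)$ for all $\tilde s,\tilde r$. $\mathcal F^i(t):=\sigma\big(\bigcup_{\tilde r:\,r_i\le t}\mathcal F(\tilde r)\big)$, $\mathbf F^i=\{\mathcal F^i(t)\}_{t\in\mathbb N_0}$. An allocation strategy for $\tilde s$ is an $\mathbb N_0^d$-valued $\{\tilde T(t)\}_{t\in\mathbb N_0}$ with $\tilde T(0)=\tilde s$, $\tilde T(t+1)=\tilde T(t)+\tilde e_j$ for some $j$ ($\tilde e_j$ unit vectors), and $\{\tilde T(t+1)=\tilde T(t)+\tilde e_j,\ \tilde T(t)=\tilde r\}\in\mathcal F(\tilde r)$ for all $j,\tilde r$; $\mathcal A(\tilde s)$ is the set of these. *)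

From HB Require Import structures.
From mathcomp Require Import all_boot all_order all_algebra.
From mathcomp Require Import all_classical all_reals all_analysis.

Set Implicit Arguments.
Unset Strict Implicit.
Unset Printing Implicit Defensive.

Import Order.TTheory GRing.Theory Num.Theory.
Local Open Scope classical_set_scope.
Local Open Scope ring_scope.

Definition midx (d : nat) := {ffun 'I_d -> nat}.

Definition mle (d : nat) (s r : midx d) : Prop := forall k : 'I_d, (s k <= r k)%N.

Definition mmeet (d : nat) (s r : midx d) : midx d := [ffun k => minn (s k) (r k)].

Definition unitv (d : nat) (j : 'I_d) : midx d := [ffun k => (k == j) : nat].

Definition madd (d : nat) (s r : midx d) : midx d := [ffun k => (s k + r k)%N].

Definition mzero (d : nat) : midx d := [ffun _ => 0%N].

Definition complete_prob (d0 : measure_display) (Omega : measurableType d0)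
  (R : realType) (P : probability Omega R) : Prop :=
  forall N A : set Omega, measurable N -> P N = 0%E -> A `<=` N -> measurable A.

Definition sub_sigma (d0 : measure_display) (Omega : measurableType d0)
  (G : set (set Omega)) : Prop :=
  sigma_algebra setT G /\ G `<=` measurable.

Definition G_measurable (d0 : measure_display) (Omega : measurableType d0)
  (R : realType) (G : set (set Omega)) (Y : Omega -> R) : Prop :=
  forall B : set R, measurable B -> G (Y @^-1` B).

Definition is_cond_exp (d0 : measure_display) (Omega : measurableType d0)
  (R : realType) (P : probability Omega R) (G : set (set Omega))
  (X Y : Omega -> R) : Prop :=
  [/\ G_measurable G Y,
      P.-integrable setT (EFin \o Y) &
      forall C, G C -> (\int[P]_(x in C) (Y x)%:E = \int[P]_(x in C) (X x)%:E)%E].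

(* G1 and G2 are conditionally independent given H:
   for A in G1, B in G2, P(A n B | H) = P(A | H) P(B | H) a.s.,
   i.e. the product of versions of P(A|H), P(B|H) is a version of P(A n B|H). *)
Definition cond_indep (d0 : measure_display) (Omega : measurableType d0)
  (R : realType) (P : probability Omega R) (G1 G2 H : set (set Omega)) : Prop :=
  forall (A B : set Omega) (fA fB : Omega -> R), G1 A -> G2 B ->
    is_cond_exp P H (\1_A) fA -> is_cond_exp P H (\1_B) fB ->
    is_cond_exp P H (\1_(A `&` B)) (fA \* fB).

Definition mfiltration (d0 : measure_display) (Omega : measurableType d0)
  (R : realType) (P : probability Omega R) (d : nat)
  (F : midx d -> set (set Omega)) : Prop :=
  [/\ (forall s, sub_sigma (F s)),
      (forall s r, mle s r -> F s `<=` F r),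
      (forall N, measurable N -> P N = 0%E -> F (mzero d) N) &
      (forall s r, cond_indep P (F s) (F r) (F (mmeet s r)))].

Definition Fi (d0 : measure_display) (Omega : measurableType d0) (d : nat)
  (F : midx d -> set (set Omega)) (i : 'I_d) (t : nat) : set (set Omega) :=
  <<s [set A | exists r : midx d, (r i <= t)%N /\ F r A] >>.

Definition allocation (d0 : measure_display) (Omega : measurableType d0) (d : nat)
  (F : midx d -> set (set Omega)) (s : midx d) (T : nat -> Omega -> midx d) : Prop :=
  [/\ (forall w, T 0%N w = s),
      (forall t w, exists j : 'I_d, T t.+1 w = madd (T t w) (unitv j)) &
      (forall (t : nat) (j : 'I_d) (r : midx d),
          F r [set w | T t.+1 w = madd (T t w) (unitv j) /\ T t w = r])].

Definition stopping_time (d0 : measure_display) (Omega : measurableType d0)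
  (G : nat -> set (set Omega)) (tau : Omega -> nat) : Prop :=
  forall u : nat, G u [set w | (tau w <= u)%N].

From HB Require Import structures.
From mathcomp Require Import all_boot all_order all_algebra.
From mathcomp Require Import all_classical all_reals all_analysis.
Local Open Scope classical_set_scope.

(* Since every step of an allocation strategy moves along some unit vector,
   {T(t) = r} is the finite union over j of the F(r)-events
   {T(t+1) = T(t) + e_j, T(t) = r}.  Hence {T_i(t) <= u} is the countable union
   of the events {T(t) = r} with r_i <= u, each lying in F(r), a generator of
   F^i(u). *)

Lemma sigma_algebra_bigcup_countable (T : pointedType) (G : set (set T))
    (I : countType) (P : set I) (A : I -> set T) :
  sigma_algebra setT G -> (forall i, P i -> G (A i)) ->
  G (\bigcup_(i in P) A i).
Proof.
move=> sG GA; have {}GA i : P i -> <<s G >> (A i).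
  by rewrite (sigma_algebra_id sG); exact: GA.
rewrite -(sigma_algebra_id sG) bigcup_mkcond.
apply: (@countable_bigcupT_measurable _ (g_sigma_algebraType G)).
  exact: countableP.
move=> i; case: ifPn => [/set_mem /GA //|_]; exact: sigma_algebra0.
Qed.

Section allocation_strategy.
Variables (d0 : measure_display) (Omega : measurableType d0) (d : nat).
Variables (F : midx d -> set (set Omega)) (T : nat -> Omega -> midx d).
Hypothesis F_sigma : forall r, sigma_algebra setT (F r).
Hypothesis T_step : forall t w, exists j : 'I_d, T t.+1 w = madd (T t w) (unitv j).
Hypothesis T_step_event : forall t (j : 'I_d) r,
  F r [set w | T t.+1 w = madd (T t w) (unitv j) /\ T t w = r].

Lemma allocation_position_event (t : nat) (r : midx d) :
  F r [set w | T t w = r].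
Proof.
have -> : [set w | T t w = r] = \bigcup_(j in [set: 'I_d])
    [set w | T t.+1 w = madd (T t w) (unitv j) /\ T t w = r].
  apply/seteqP; split => w /=; last by case=> j _ [].
  by move=> Ttw; have [j Tj] := T_step t w; exists j.
by apply: sigma_algebra_bigcup_countable => // j _; exact: T_step_event.
Qed.

Lemma allocation_coord_stopping_time (i : 'I_d) (t : nat) :
  stopping_time (Fi F i) (fun w => T t w i).
Proof.
move=> u.
have -> : [set w | (T t w i <= u)%N] =
    \bigcup_(r in [set r : midx d | (r i <= u)%N]) [set w | T t w = r].
  apply/seteqP; split => w /=; first by move=> Ttwi; exists (T t w).
  by case=> r /= ri_le ->.
apply: sigma_algebra_bigcup_countable => [|r ri_le]; first exact: smallest_sigma_algebra.
apply: sub_sigma_algebra; exists r; split => //.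
exact: allocation_position_event.
Qed.

End allocation_strategy.

Theorem proposition6p7 (d0 : measure_display) (Omega : measurableType d0)
  (R : realType) (P : probability Omega R) (d : nat)
  (F : midx d -> set (set Omega))
  (hP : complete_prob P) (hF : mfiltration P F)
  (s : midx d) (T : nat -> Omega -> midx d) (hT : allocation F s T) :
  forall (i : 'I_d) (t : nat), stopping_time (Fi F i) (fun w => T t w i).
Proof.
case: hF => F_sub_sigma _ _ _; case: hT => _ T_step T_step_event.
apply: allocation_coord_stopping_time T_step T_step_event.
by move=> r; case: (F_sub_sigma r).
Qed.
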